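(* Let $R$ be a semiprimary ring. Then $R$ is rigid if and only if the dual $\mathring{\mathbf{I}}^{\mathscr{J}}$ of the Jacobson system of $R$ equals the Jacobson system of $R^{\mathrm{op}}$.
   Context: A ring $R$ is semiprimary if its Jacobson radical $\mathscr{J}$ is nilpotent and $R/\mathscr{J}$ is semisimple; its Loewy length $d$ is the nilpotency index of $\mathscr{J}$ (same for $R^{\mathrm{op}}$, whose Jacobson radical is $\mathscr{J}$), and $\mathscr{J}^0=R$. The Jacobson system of $R$ is $I^{\mathscr{J}}_{ij}:=\{x\in R\mid x\mathscr{J}^{d+1-j}\subset\mathscr{J}^{d+1-i}\}$ for $1\le i,j\le d+1$; the Jacobson system of $R^{\mathrm{op}}$ is defined in the same way using the multiplication of $R^{\mathrm{op}}$, i.e. $\{x\in R\mid \mathscr{J}^{d+1-j}x\subset\mathscr{J}^{d+1-i}\}$. For a $d$-system $\mathbf{I}$ of ideals in $R$, its dual is the system of ideals in $R^{\mathrm{op}}$ given by $\mathring{I}_{ij}:=I_{d+2-j,d+2-i}$. A finite-length module is rigid if it has exactly one Loewy filtration (a semisimple filtration of minimal length); $R$ is rigid if both ${}_RR$ and $R_R$ are rigid. *)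

From HB Require Import structures.
From mathcomp Require Import all_boot all_order all_algebra.
Set Implicit Arguments. Unset Strict Implicit. Unset Printing Implicit Defensive.
Import GRing.Theory.
Local Open Scope ring_scope.

Definition left_ideal (R : pzRingType) (L : R -> Prop) : Prop :=
  [/\ L 0, (forall x y, L x -> L y -> L (x - y)) & (forall r x, L x -> L (r * x))].

Definition maximal_left_ideal (R : pzRingType) (L : R -> Prop) : Prop :=
  [/\ left_ideal L, ~ L 1 &
      forall L' : R -> Prop, left_ideal L' -> (forall x, L x -> L' x) ->
        (forall x, L' x <-> L x) \/ (forall x, L' x)].

Definition jac (R : pzRingType) (x : R) : Prop :=
  forall L : R -> Prop, maximal_left_ideal L -> L x.

Fixpoint jpow (R : pzRingType) (k : nat) (x : R) : Prop :=
  match k with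
  | 0%N => True
  | k'.+1 => exists (m : nat) (a b : 'I_m -> R),
      [/\ forall i, jac (a i), forall i, jpow k' (b i) &
          x = \sum_(i < m) a i * b i]
  end.

(* Semisimple filtration of the left regular module: submodules are left
   ideals; M 0 = 0, M n = R, increasing, and each factor M (i+1) / M i is
   semisimple, i.e. every submodule between M i and M (i+1) has a
   complement (modulo M i). *)
Definition semisimple_factor (R : pzRingType) (A B : R -> Prop) : Prop :=
  forall N : R -> Prop, left_ideal N ->
    (forall x, A x -> N x) -> (forall x, N x -> B x) ->
    exists N' : R -> Prop,
      [/\ left_ideal N', (forall x, A x -> N' x), (forall x, N' x -> B x),
          (forall x, B x -> exists a b, [/\ N a, N' b & x = a + b]) &
          (forall x, N x -> N' x -> A x)].

Definition semisimple_filtration (R : pzRingType) (n : nat) (M : nat -> R -> Prop)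
  : Prop :=
  [/\ (forall i, (i <= n)%N -> left_ideal (M i)),
      (forall x, M 0%N x <-> x = 0),
      (forall x, M n x),
      (forall i x, (i < n)%N -> M i x -> M i.+1 x) &
      (forall i, (i < n)%N -> semisimple_factor (M i) (M i.+1))].

Definition loewy_filtration (R : pzRingType) (n : nat) (M : nat -> R -> Prop)
  : Prop :=
  semisimple_filtration n M /\
  forall m (M' : nat -> R -> Prop), semisimple_filtration m M' -> (n <= m)%N.

Definition left_rigid (R : pzRingType) : Prop :=
  (exists n M, @loewy_filtration R n M) /\
  forall n M n' M', @loewy_filtration R n M -> @loewy_filtration R n' M' ->
    n = n' /\ forall i, (i <= n)%N -> forall x, M i x <-> M' i x.

(* R rigid: both _R R and R_R (= left regular module of R^op) rigid. *)
Definition rigid_ring (R : pzRingType) : Prop := left_rigid R /\ left_rigid R^c.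

Definition semisimple_ring_mod_jac (R : pzRingType) : Prop :=
  forall L : R -> Prop, left_ideal L -> (forall x, jac x -> L x) ->
    exists L' : R -> Prop,
      [/\ left_ideal L', (forall x, jac x -> L' x),
          (forall x, exists a b, [/\ L a, L' b & x = a + b]) &
          (forall x, L x -> L' x -> jac x)].

Definition semiprimary (R : pzRingType) : Prop :=
  (exists n, forall x : R, jpow n x -> x = 0) /\ semisimple_ring_mod_jac R.

(* d is the Loewy length: nilpotency index of J. *)
Definition loewy_length (R : pzRingType) (d : nat) : Prop :=
  (forall x : R, jpow d x -> x = 0) /\
  forall k, (forall x : R, jpow k x -> x = 0) -> (d <= k)%N.

Definition jsys (R : pzRingType) (d i j : nat) (x : R) : Prop :=
  forall y, jpow (d.+1 - j) y -> jpow (d.+1 - i) (x * y).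

Definition jsys_op (R : pzRingType) (d i j : nat) (x : R) : Prop :=
  forall y, jpow (d.+1 - j) y -> jpow (d.+1 - i) (y * x).

Definition dual_sys (R : pzRingType) (d : nat) (I : nat -> nat -> R -> Prop)
  (i j : nat) : R -> Prop := I (d.+2 - j)%N (d.+2 - i)%N.

(* Every semisimple filtration M of the left regular module satisfies
   J^k M_(i+k) ⊆ M_i, because J annihilates semisimple factors (a Nakayama
   argument).  Hence Loewy filtrations have length d and are squeezed between
   the radical filtration J^(d-i) and the socle filtration l(J^i), both of
   which are semisimple; so _R R is rigid iff l(J^i) ⊆ J^(d-i) for all i, and
   likewise R_R is rigid iff r(J^i) ⊆ J^(d-i).  Unwinding the Jacobson
   systems, the dual system {x | x J^(i-1) ⊆ J^(j-1)} agrees with the system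
   {x | J^(d+1-j) x ⊆ J^(d+1-i)} of R^op exactly when both socle inclusions
   hold.  The right-hand side is the same argument in R^op, whose radical is
   again J; there semisimplicity of R/J as a right module comes from its von
   Neumann regularity together with the stabilisation of ascending chains of
   idempotents modulo J. *)

From HB Require Import structures.
From mathcomp Require Import all_boot all_order all_algebra.
From mathcomp Require Import boolp classical_sets zify.
Set Implicit Arguments. Unset Strict Implicit. Unset Printing Implicit Defensive.
Import GRing.Theory.
Local Open Scope ring_scope.

Section LeftIdeals.
Variable S : pzRingType.
Implicit Types (L C D : S -> Prop) (x y r e : S).

Lemma left_ideal0 L : left_ideal L -> L 0.
Proof. by case. Qed.

Lemma left_idealB L x y : left_ideal L -> L x -> L y -> L (x - y).
Proof. by case=> _ h _; apply: h. Qed.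

Lemma left_idealM L r x : left_ideal L -> L x -> L (r * x).
Proof. by case=> _ _ h; apply: h. Qed.

Lemma left_idealN L x : left_ideal L -> L x -> L (- x).
Proof. by move=> hL hx; rewrite -sub0r; apply: left_idealB => //; apply: left_ideal0. Qed.

Lemma left_idealD L x y : left_ideal L -> L x -> L y -> L (x + y).
Proof. by move=> hL hx hy; rewrite -[y]opprK; apply: left_idealB => //; apply: left_idealN. Qed.

Lemma left_ideal_preim_mulr L r : left_ideal L -> left_ideal (fun y => L (y * r)).
Proof.
move=> hL; split=> [|x y Lx Ly|s x Lx]; first by rewrite mul0r; apply: left_ideal0.
- by rewrite mulrBl; apply: left_idealB.
- by rewrite -mulrA; apply: left_idealM.
Qed.

Lemma left_ideal_image_mulr L r : left_ideal L -> left_ideal (fun z => exists y, L y /\ z = y * r).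
Proof.
move=> hL; split=> [|_ _ [x [Lx ->]] [y [Ly ->]]|s _ [x [Lx ->]]].
- by exists 0; rewrite mul0r; split => //; apply: left_ideal0.
- by exists (x - y); rewrite mulrBl; split => //; apply: left_idealB.
- by exists (s * x); rewrite mulrA; split => //; apply: left_idealM.
Qed.

Lemma left_ideal_add C D : left_ideal C -> left_ideal D ->
  left_ideal (fun z => exists a c, [/\ C a, D c & z = a + c]).
Proof.
move=> hC hD; split=> [|_ _ [a [c [Ca Dc ->]]] [b [e [Cb De ->]]]|s _ [a [c [Ca Dc ->]]]].
- by exists 0, 0; rewrite addr0; split => //; apply: left_ideal0.
- by exists (a - b), (c - e); rewrite opprD addrACA; split => //; apply: left_idealB.
- by exists (s * a), (s * c); rewrite mulrDr; split => //; apply: left_idealM.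
Qed.

Lemma left_ideal_add_principal C e : left_ideal C ->
  left_ideal (fun z => exists c s, C c /\ z = c + s * e).
Proof.
move=> hC; split=> [|_ _ [a [r [Ca ->]]] [b [s [Cb ->]]]|t _ [a [r [Ca ->]]]].
- by exists 0, 0; rewrite mul0r addr0; split => //; apply: left_ideal0.
- by exists (a - b), (r - s); rewrite mulrBl opprD addrACA; split => //; apply: left_idealB.
- by exists (t * a), (t * r); rewrite mulrDr mulrA; split => //; apply: left_idealM.
Qed.

End LeftIdeals.

Definition semisimple_mod (S : pzRingType) (Jp : S -> Prop) : Prop :=
  forall L : S -> Prop, left_ideal L -> (forall x, Jp x -> L x) ->
    exists L' : S -> Prop,
      [/\ left_ideal L', (forall x, Jp x -> L' x),
          (forall x, exists a b, [/\ L a, L' b & x = a + b]) &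
          (forall x, L x -> L' x -> Jp x)].

Definition partial_complement (S : pzRingType) (A B N C : S -> Prop) : Prop :=
  [/\ left_ideal C, (forall x, A x -> C x), (forall x, C x -> B x) &
      (forall x, N x -> C x -> A x)].

Section SemisimpleFactors.
Local Open Scope classical_set_scope.
Variable S : pzRingType.
Implicit Types (A B N L : S -> Prop) (x y r j : S).

Lemma semisimple_factor_kill A B j : left_ideal A -> left_ideal B ->
  (forall x, A x -> B x) -> semisimple_factor A B ->
  (forall r, exists u, u * (1 - r * j) = 1) -> forall x, B x -> A (j * x).
Proof.
move=> hA hB AB hss hu x Bx.
pose N z := exists a r, A a /\ z = a + r * (j * x).
have hN : left_ideal N := left_ideal_add_principal (j * x) hA.
have AN z : A z -> N z by move=> Az; exists z, 0; rewrite mul0r addr0.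
have NB z : N z -> B z.
  case=> a [r [Aa ->]]; apply: (left_idealD hB (AB _ Aa)).
  by apply: (left_idealM _ hB); apply: (left_idealM _ hB).
have [N' [hN' _ _ cov cap]] := hss N hN AN NB.
(* (1 - r j) x = a0 + n' with n' in N'; then j u n' lies in N and N', hence in A *)
have [_ [n' [[a0 [r [Aa0 ->]]] N'n' ex]]] := cov x Bx.
have [u hu'] := hu r.
have ex2 : x = u * a0 + u * n'.
  rewrite -mulrDr -[x in LHS]mul1r -hu' -mulrA; congr (_ * _).
  by rewrite mulrBl mul1r -mulrA {1}ex addrAC addrK.
have jun' : A (j * u * n').
  apply: cap; last exact: left_idealM hN' N'n'.
  have -> : j * u * n' = j * x - j * u * a0 by rewrite ex2 mulrDr !mulrA addrC addKr.
  apply: left_idealB => //; last by apply: AN; apply: left_idealM.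
  by exists 0, 1; rewrite mul1r add0r; split => //; apply: left_ideal0.
by rewrite ex2 mulrDr !mulrA; apply: left_idealD => //; apply: left_idealM.
Qed.

Lemma partial_complement_maximal A B N : left_ideal A -> (forall x, A x -> B x) ->
  exists C, partial_complement A B N C /\
            forall D, C `<` D -> ~ partial_complement A B N D.
Proof.
move=> hA AB.
(* set0 is admitted so that the empty chain has an upper bound *)
pose P := fun C : set S => C = set0 \/ partial_complement A B N C.
have [C0 [PC0 maxC0]] : exists C0, P C0 /\ forall D, C0 `<` D -> ~ P D.
  apply: Zorn_bigcup => F FP Ftot.
  have good C x : F C -> C x -> partial_complement A B N C.
    by move=> FC Cx; case: (FP C FC) => // C0; rewrite C0 in Cx.
  case: (pselect (exists C, F C /\ partial_complement A B N C)) => [[C1 [FC1 gC1]]|nog].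
    right; split=> [|x Ax|x [C FC Cx]|x Nx [C FC Cx]].
    - split=> [|x y [Cx FCx Cxx] [Cy FCy Cyy]|r x [C FC Cx]].
      + by exists C1 => //; case: gC1 => hC1 _ _ _; apply: left_ideal0.
      + case: (Ftot _ _ FCx FCy) => sub; [exists Cy | exists Cx] => //.
          by have [hCy _ _ _] := good _ _ FCy Cyy; apply: left_idealB => //; apply: sub.
        by have [hCx _ _ _] := good _ _ FCx Cxx; apply: left_idealB => //; apply: sub.
      + by exists C => //; have [hC _ _ _] := good _ _ FC Cx; apply: left_idealM.
    - by exists C1 => //; case: gC1 => _ h _ _; apply: h.
    - by have [_ _ h _] := good _ _ FC Cx; apply: h.
    - by have [_ _ _ h] := good _ _ FC Cx; apply: h.
  left; apply/seteqP; split => x // [C FC Cx].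
  by case: nog; exists C; split => //; apply: good Cx.
exists C0; split=> [|D ltD gD]; last by apply: (maxC0 D) => //; right.
case: PC0 => // C0eq; exfalso; apply: (maxC0 A); last by right; split.
by rewrite C0eq; split => [x []|/(_ 0 (left_ideal0 hA))[]].
Qed.

Lemma semisimple_factor_of_annihilated (Jp : S -> Prop) A B : semisimple_mod Jp ->
  left_ideal A -> left_ideal B -> (forall x, A x -> B x) ->
  (forall a x, Jp a -> B x -> A (a * x)) -> semisimple_factor A B.
Proof.
move=> hJ hA hB AB JBA N hN AN NB.
have [C [[hC AC CB NC] maxC]] := partial_complement_maximal N hA AB.
exists C; split => // b0 Bb0.
case: (pselect (exists a b, [/\ N a, C b & b0 = a + b])) => // nocov; exfalso.
(* complement {r | r b0 in N + C} modulo Jp; the part l' of 1 in the complement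
   gives an element l' b0 enlarging C *)
pose K z := exists a c, [/\ N a, C c & z = a + c].
have hK : left_ideal K := left_ideal_add hN hC.
have JK x : Jp x -> K (x * b0).
  by move=> Jx; exists 0, (x * b0); rewrite add0r; split => //; [apply: left_ideal0 | apply/AC/JBA].
have [L' [hL' _ cov cap]] := hJ _ (left_ideal_preim_mulr b0 hK) JK.
have [l [l' [Ll L'l' E1]]] := cov 1.
pose e := l' * b0.
have nKe : ~ K e.
  move=> Ke; apply: nocov.
  have : K b0 by rewrite -[b0]mul1r E1 mulrDl; apply: left_idealD.
  by case=> a [c [Na Cc ->]]; exists a, c.
pose D z := exists c s, C c /\ z = c + s * e.
apply: (maxC D); last first.
  split=> [|x Cx|x [c [s [Cc ->]]]|x Nx [c [s [Cc Ex]]]].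
  - exact: left_ideal_add_principal.
  - by exists x, 0; rewrite mul0r addr0; split => //; apply: AC.
  - apply: left_idealD => //; first exact: CB.
    by rewrite /e mulrA; apply: left_idealM.
  - have Kse : K (s * e).
      by exists x, (- c); split => //; [exact: left_idealN hC Cc | rewrite Ex addrAC subrr add0r].
    have Jsl : Jp (s * l') by apply: cap; [rewrite /= -mulrA | apply: left_idealM].
    have Ase : A (s * e) by rewrite /e mulrA; apply: JBA.
    have Ac : A c.
      apply: NC => //; have -> : c = x - s * e by rewrite Ex addrK.
      by apply: left_idealB => //; apply: AN.
    by rewrite Ex; apply: left_idealD.
split; first by move=> x Cx; exists x, 0; rewrite mul0r addr0.
move=> /(_ e) h; apply: nKe; exists 0, e; split; first exact: left_ideal0.
- by apply: h; exists 0, 1; rewrite mul1r add0r; split => //; apply: left_ideal0.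
- by rewrite add0r.
Qed.

End SemisimpleFactors.

Lemma nilpotent_unit (S : pzRingType) (z : S) n : z ^+ n = 0 ->
  (exists u, u * (1 - z) = 1) /\ (exists u, (1 - z) * u = 1).
Proof.
move=> zn; set s := \sum_(i < n) z ^+ i.
have h : (1 - z) * s = 1 by rewrite -opprB mulNr -subrX1 zn sub0r opprK.
have cs : s * z = z * s.
  by rewrite /s mulr_suml mulr_sumr; apply: eq_bigr => i _; rewrite -exprSr -exprS.
split; exists s => //.
by rewrite mulrBr mulr1 cs -[X in X - _]mul1r -mulrBl.
Qed.

Section JacobsonRadical.
Variable R : pzRingType.
Implicit Types (x y z r a b j : R).

Lemma jac_left_ideal : left_ideal (@jac R).
Proof.
split=> [L [[]] //|x y Jx Jy L hL|r x Jx L hL].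
- by apply: left_idealB; [case: hL | apply: Jx | apply: Jy].
- by apply: left_idealM; [case: hL | apply: Jx].
Qed.

(* If r is not in the maximal left ideal L, then {y | y r in L} is again a
   maximal left ideal, since R/L is simple. *)
Lemma jac_mulr x r : jac x -> jac (x * r).
Proof.
move=> Jx L hL; have [hLi _ maxL] := hL.
case: (pselect (L r)) => Lr; first exact: left_idealM.
apply: (Jx (fun y => L (y * r))); split=> [|/=|L'' hL'' sub]; first exact: left_ideal_preim_mulr.
  by rewrite mul1r.
pose T z := exists l c, [/\ L l, (exists y, L'' y /\ c = y * r) & z = l + c].
have hT : left_ideal T := left_ideal_add hLi (left_ideal_image_mulr r hL'').
have LT z : L z -> T z.
  move=> Lz; exists z, 0; rewrite addr0; split => //.
  by exists 0; rewrite mul0r; split => //; apply: left_ideal0.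
case: (maxL T hT LT) => [TL|Tall].
  left => y; split => [L''y|]; last exact: sub.
  by apply/TL; exists 0, (y * r); rewrite add0r; split => //; [apply: left_ideal0 | exists y].
right => z; have [l [_ [Ll [w [L''w ->]] E]]] := Tall (z * r).
have L'zw : L ((z - w) * r) by rewrite mulrBl E addrK.
by rewrite -(subrK w z); apply: left_idealD => //; apply: sub.
Qed.

Lemma jpow_left_ideal k : left_ideal (@jpow R k).
Proof.
case: k => [|k]; first by split.
split=> [|_ _ [m1 [a [b [Ja Pb ->]]]] [m2 [c [e [Jc Pe ->]]]]|r _ [m [a [b [Ja Pb ->]]]]].
- by exists 0%N, (fun _ => 0), (fun _ => 0); split => [[]|[]|]; rewrite ?big_ord0.
- exists (m1 + m2)%N, (fun i => match split i with inl t => a t | inr t => - c t end).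
  exists (fun i => match split i with inl t => b t | inr t => e t end); split.
  + by move=> i; case: (split i) => t; [apply: Ja | apply: left_idealN jac_left_ideal (Jc t)].
  + by move=> i; case: (split i) => t; [apply: Pb | apply: Pe].
  + rewrite big_split_ord /= -sumrN; congr (_ + _); apply: eq_bigr => i _.
      by rewrite (unsplitK (inl i)).
    by rewrite (unsplitK (inr i)) mulNr.
- exists m, (fun i => r * a i), b; split => [i||].
  + exact: left_idealM jac_left_ideal (Ja i).
  + exact: Pb.
  + by rewrite mulr_sumr; apply: eq_bigr => i _; rewrite mulrA.
Qed.

Lemma jpow_mulr k x r : jpow k x -> jpow k (x * r).
Proof.
elim: k x => [//|k IH] _ [m [a [b [Ja Pb ->]]]].
exists m, a, (fun i => b i * r); split => [|i|]; [exact: Ja | exact: IH (Pb i) |].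
by rewrite mulr_suml; apply: eq_bigr => i _; rewrite mulrA.
Qed.

Lemma jpow_jac_mul k a b : jac a -> jpow k b -> jpow k.+1 (a * b).
Proof. by move=> Ja Pb; exists 1%N, (fun _ => a), (fun _ => b); rewrite big_ord1; split. Qed.

Lemma jpow_mul k l x y : jpow k x -> jpow l y -> jpow (k + l) (x * y).
Proof.
elim: k x => [|k IH] x; first by move=> _ Py; apply: left_idealM (jpow_left_ideal l) Py.
move=> [m [a [b [Ja Pb ->]]]] Py; exists m, a, (fun i => b i * y).
split => [|i|]; [exact: Ja | exact: IH (Pb i) Py |].
by rewrite mulr_suml; apply: eq_bigr => i _; rewrite mulrA.
Qed.

Lemma jpow_mul_jac k y a : jpow k y -> jac a -> jpow k.+1 (y * a).
Proof.
by move=> Py Ja; rewrite -addn1; apply: jpow_mul Py _; rewrite -[a]mulr1; apply: jpow_jac_mul.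
Qed.

Lemma jpow_exp j n : jac j -> jpow n (j ^+ n).
Proof. by move=> Jj; elim: n => [//|n IH]; rewrite exprS; apply: jpow_jac_mul. Qed.

Lemma jpow_ind_right k (A : R -> Prop) : A 0 -> (forall x y, A x -> A y -> A (x + y)) ->
  (forall y a, jpow k y -> jac a -> A (y * a)) -> forall x, jpow k.+1 x -> A x.
Proof.
elim: k A => [|k IH] A A0 AD HA _ [m [a [b [Ja Pb ->]]]]; apply: (big_ind A) => // i _.
  by rewrite -[_ * _]mul1r; apply: HA => //; apply: jac_mulr.
apply: (IH (fun z => A (a i * z))) (Pb i) => [|y z|y e Py Je].
- by rewrite mulr0.
- by rewrite mulrDr; apply: AD.
- by rewrite mulrA; apply: HA => //; apply: jpow_jac_mul.
Qed.

Variable d : nat.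
Hypothesis Jnil : forall x : R, jpow d x -> x = 0.

Lemma jac_quasi_regular j r : jac j -> exists u, u * (1 - r * j) = 1.
Proof.
by move=> Jj; apply: (nilpotent_unit (Jnil (jpow_exp d (left_idealM r jac_left_ideal Jj)))).1.
Qed.

Lemma jac_quasi_regular_op j r : jac j -> exists u, (1 - j * r) * u = 1.
Proof. by move=> Jj; apply: (nilpotent_unit (Jnil (jpow_exp d (jac_mulr r Jj)))).2. Qed.

End JacobsonRadical.

Section JacobsonCongruence.
Variable R : pzRingType.
Implicit Types x y z : R.

Lemma jac_subrr x : jac (x - x).
Proof. by rewrite subrr; apply: left_ideal0 (jac_left_ideal R). Qed.

Lemma jac_sub_sym x y : jac (x - y) -> jac (y - x).
Proof. by move=> h; rewrite -opprB; apply: left_idealN (jac_left_ideal R) h. Qed.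

Lemma jac_sub_trans x y z : jac (x - y) -> jac (y - z) -> jac (x - z).
Proof.
by move=> h1 h2; rewrite -(subrKA y); apply: left_idealD (jac_left_ideal R) h1 h2.
Qed.

Lemma jac_subD x x' y y' : jac (x - x') -> jac (y - y') -> jac ((x + y) - (x' + y')).
Proof. by move=> h1 h2; rewrite opprD addrACA; apply: left_idealD (jac_left_ideal R) h1 h2. Qed.

Lemma jac_subB x x' y y' : jac (x - x') -> jac (y - y') -> jac ((x - y) - (x' - y')).
Proof.
by move=> h1 h2; apply: jac_subD h1 _; rewrite -opprD; apply: left_idealN (jac_left_ideal R) h2.
Qed.

Lemma jac_subMl z x x' : jac (x - x') -> jac (z * x - z * x').
Proof. by move=> h; rewrite -mulrBr; apply: left_idealM (jac_left_ideal R) h. Qed.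

Lemma jac_subMr z x x' : jac (x - x') -> jac (x * z - x' * z).
Proof. by move=> h; rewrite -mulrBl; apply: jac_mulr. Qed.

End JacobsonCongruence.

Definition jac_idem (R : pzRingType) (f : R) := jac (f * f - f).

Section RightSemisimple.
Variable R : pzRingType.
Hypothesis Hss : semisimple_ring_mod_jac R.
Implicit Types (x y z r a f k : R).

Lemma left_ideal_jac_unit (L : R -> Prop) : left_ideal L -> (forall x, jac x -> L x) ->
  exists2 u, L u & forall y, L y -> jac (y - y * u).
Proof.
move=> hL JL; have [L' [hL' _ cov cap]] := Hss hL JL.
have [u [u' [Lu L'u' E1]]] := cov 1; exists u => // y Ly.
have yu' : y - y * u = y * u' by rewrite -{1}[y]mulr1 E1 mulrDr addrAC subrr add0r.
by apply: cap; [apply: left_idealB (left_idealM _ hL Lu) | rewrite yu'; apply: left_idealM].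
Qed.

Lemma jac_regular x : exists a, jac (x - x * a * x).
Proof.
pose L z := exists c s, jac c /\ z = c + s * x.
have hL : left_ideal L := left_ideal_add_principal x (jac_left_ideal R).
have JL z : jac z -> L z by move=> Jz; exists z, 0; rewrite mul0r addr0.
have [_ [c [s [Jc ->]]] hu] := left_ideal_jac_unit hL JL.
exists s; have := hu x; rewrite mulrDr mulrA => h.
have -> : x - x * s * x = (x - (x * c + x * s * x)) + x * c by rewrite opprD addrA addrAC subrK.
apply: left_idealD (jac_left_ideal R) (h _) (left_idealM _ (jac_left_ideal R) Jc).
by exists 0, 1; rewrite mul1r add0r; split => //; apply: left_ideal0 (jac_left_ideal R).
Qed.

Lemma jac_idem_add f e : jac_idem f -> jac_idem e -> jac (f * e) -> jac (e * f) ->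
  jac_idem (f + e).
Proof.
move=> If Ie fe ef; rewrite /jac_idem mulrDl !mulrDr.
have -> : f + e = (f + 0) + (0 + e) by rewrite addr0 add0r.
by apply: jac_subD; apply: jac_subD; rewrite ?subr0.
Qed.

Lemma idempotent_chain_stationary (fs : nat -> R) : (forall n, jac_idem (fs n)) ->
  (forall n, jac (fs n.+1 * fs n - fs n)) -> (forall n, jac (fs n * fs n.+1 - fs n)) ->
  exists N, jac (fs N.+1 - fs N).
Proof.
move=> Ifs lo ro.
have mono1 n z : jac (z - z * fs n) -> jac (z - z * fs n.+1).
  move=> hz; apply: jac_sub_sym.
  have a1 : jac (z * fs n.+1 - z * fs n * fs n.+1) := jac_subMr _ hz.
  have a2 : jac (z * fs n * fs n.+1 - z * fs n) by rewrite -mulrA; apply: jac_subMl.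
  exact: jac_sub_trans a1 (jac_sub_trans a2 (jac_sub_sym hz)).
have mono n m z : (n <= m)%N -> jac (z - z * fs n) -> jac (z - z * fs m).
  move/subnK <-; elim: (m - n)%N => [|p IH] hz; first by rewrite add0n.
  by rewrite addSn; apply: mono1; apply: IH.
(* the union of the left ideals {z | z = z f_n mod J} has a generator u mod J *)
pose U z := exists n, jac (z - z * fs n).
have hU : left_ideal U.
  split=> [|x y [n hx] [m hy]|r x [n hx]].
  - by exists 0%N; rewrite mul0r subr0; apply: left_ideal0 (jac_left_ideal R).
  - exists (maxn n m); rewrite mulrBl; apply: jac_subB.
      exact: mono (leq_maxl n m) hx.
    exact: mono (leq_maxr n m) hy.
  - by exists n; rewrite -mulrA; apply: jac_subMl.
have JU z : jac z -> U z.
  by move=> Jz; exists 0%N; apply: left_idealB (jac_left_ideal R) Jz (jac_mulr _ Jz).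
have [u [N hN] hu] := left_ideal_jac_unit hU JU.
exists N; set f := fs N.+1.
have b1 : jac (f - f * u) by apply: hu; exists N.+1; apply: jac_sub_sym; apply: Ifs.
have b2 : jac (f * u - f * u * fs N) by rewrite -mulrA; apply: jac_subMl.
have b3 : jac (f * u * fs N - f * fs N) := jac_subMr _ (jac_sub_sym b1).
exact: jac_sub_trans b1 (jac_sub_trans b2 (jac_sub_trans b3 (lo N))).
Qed.

Variable K : R -> Prop.
Hypotheses (K0 : K 0) (KB : forall x y, K x -> K y -> K (x - y))
  (KM : forall x r, K x -> K (x * r)).

Lemma right_idealD x y : K x -> K y -> K (x + y).
Proof. by move=> Kx Ky; rewrite -[y]opprK -[- y]sub0r; apply: KB (KB K0 Ky). Qed.

(* h = k - f k is regular mod J, so e = h a is idempotent mod J with e h = h;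
   e' = e - e f is then orthogonal to f, and f + e' absorbs k. *)
Lemma idempotent_extend f k : K f -> jac_idem f -> K k ->
  exists f', [/\ K f', jac_idem f', jac (f' * f - f), jac (f * f' - f) & jac (k - f' * k)].
Proof.
move=> Kf If Kk.
set h := k - f * k; have [a ha] := jac_regular h.
set e := h * a; set e' := e - e * f.
have Kh : K h by apply: KB => //; apply: KM.
have fh : jac (f * h).
  have -> : f * h = - ((f * f - f) * k) by rewrite mulrBr mulrA mulrBl opprB.
  by apply: left_idealN (jac_left_ideal R) _; apply: jac_mulr.
have e'f : jac (e' * f).
  have -> : e' * f = - (e * (f * f - f)) by rewrite mulrBl mulrBr mulrA opprB.
  by apply: left_idealN (jac_left_ideal R) _; apply: left_idealM (jac_left_ideal R) If.
have fe' : jac (f * e').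
  rewrite mulrBr !mulrA.
  by apply: left_idealB (jac_left_ideal R) _ _; [apply: jac_mulr | do 2 apply: jac_mulr].
have ee : jac_idem e.
  rewrite /jac_idem; have -> : e * e - e = (h * a * h - h) * a by rewrite mulrBl !mulrA.
  by apply: jac_mulr; apply: jac_sub_sym.
have e'e : jac (e' * e - e).
  have -> : e' * e - e = (e * e - e) - e * ((f * h) * a) by rewrite mulrBl !mulrA addrAC.
  apply: left_idealB (jac_left_ideal R) ee _.
  by apply: left_idealM (jac_left_ideal R) _; apply: jac_mulr.
have Ie' : jac_idem e'.
  have e'E : e' = e * (1 - f) by rewrite mulrBr mulr1.
  rewrite /jac_idem; have -> : e' * e' - e' = (e' * e - e) * (1 - f).
    by rewrite [in RHS]mulrBl -[in RHS]mulrA -e'E.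
  exact: jac_mulr.
exists (f + e'); split.
- by apply: right_idealD => //; apply: KB; apply: KM => //; apply: KM.
- exact: jac_idem_add.
- by rewrite mulrDl -[X in _ - X]addr0; apply: jac_subD; rewrite ?subr0.
- by rewrite mulrDr -[X in _ - X]addr0; apply: jac_subD; rewrite ?subr0.
- have -> : (f + e') * k = f * k + h * a * h by rewrite mulrDl mulrBl -(mulrA e) -mulrBr.
  by rewrite opprD addrA.
Qed.

Lemma right_ideal_jac_generator :
  exists f, [/\ K f, jac_idem f & forall k, K k -> jac (k - f * k)].
Proof.
(* otherwise idempotent_extend yields a chain of idempotents that never stops *)
apply: contrapT => nogen.
pose step f f' := [/\ K f', jac_idem f', jac (f' * f - f), jac (f * f' - f) &
   exists k, [/\ K k, ~ jac (k - f * k) & jac (k - f' * k)]].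
have [g hg] : {g : R -> R & forall f, K f /\ jac_idem f -> step f (g f)}.
  apply: (@boolp.choice R R (fun f f' => K f /\ jac_idem f -> step f f')) => f.
  case: (pselect (K f /\ jac_idem f)) => [[Kf If]|]; last by exists 0.
  have [k [Kk nk]] : exists k, K k /\ ~ jac (k - f * k).
    apply: contrapT => nex; apply: nogen; exists f; split => // k Kk.
    by apply: contrapT => nk; apply: nex; exists k.
  have [f' [Kf' If' h1 h2 h3]] := idempotent_extend Kf If Kk.
  by exists f'; split => //; exists k.
pose fs n := iter n g 0.
have KI n : K (fs n) /\ jac_idem (fs n).
  elim: n => [|n [Kn In]]; first by split => //; rewrite /jac_idem /= mulr0; apply: jac_subrr.
  by have [? ? ? ? ?] := hg _ (conj Kn In).
have sp n : step (fs n) (fs n.+1) := hg _ (KI n).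
have [N hN] : exists N, jac (fs N.+1 - fs N).
  by apply: idempotent_chain_stationary => n; [case: (KI n) | case: (sp n) | case: (sp n)].
have [_ _ _ _ [k [_ nk hk]]] := sp N.
by apply: nk; apply: jac_sub_trans hk (jac_subMr _ hN).
Qed.

End RightSemisimple.

Lemma semisimple_mod_jac_op (R : pzRingType) :
  semisimple_ring_mod_jac R -> @semisimple_mod R^c (@jac R).
Proof.
move=> Hss L hL JL.
have [f [Lf If gf]] := right_ideal_jac_generator Hss (left_ideal0 hL)
  (fun x y => @left_idealB _ L x y hL) (fun x r Lx => @left_idealM R^c L r x hL Lx).
(* K = f R modulo J, with complement {z | f z in J} *)
exists (fun z : R^c => @jac R (f * (z : R))); split.
- split=> [|x y Jx Jy|r x Jx] /=.
  + by rewrite mulr0; apply: left_ideal0 (jac_left_ideal R).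
  + by rewrite (mulrBr f (x : R)); apply: left_idealB (jac_left_ideal R) Jx Jy.
  + by rewrite (mulrA f (x : R)); apply: jac_mulr.
- by move=> x Jx /=; apply: left_idealM (jac_left_ideal R) Jx.
- move=> x; exists ((x : R^c) * (f : R^c)), (x - (x : R^c) * (f : R^c)); split.
  + exact: (@left_idealM R^c L x f hL Lf).
  + change (jac ((f : R) * ((x : R) - (f : R) * (x : R)))).
    rewrite mulrBr mulrA -mulrBl -opprB mulNr.
    exact: left_idealN (jac_left_ideal R) (jac_mulr _ If).
  + by rewrite addrC subrK.
- move=> x Lx Jfx; rewrite -(subrK (f * (x : R)) x).
  exact: left_idealD (jac_left_ideal R) (gf x Lx) Jfx.
Qed.

(* The properties of the powers J^k needed below; the same sets J^k satisfy
   them in R and in R^op. *)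
Record radical_powers (S : pzRingType) (Jp : S -> Prop) (P : nat -> S -> Prop)
    (d : nat) : Prop := RadicalPowers {
  powers_quasi_regular : forall j r, Jp j -> exists u, u * (1 - r * j) = 1;
  powers_semisimple : semisimple_mod Jp;
  powers_left_ideal : forall k, left_ideal (P k);
  powers_mulr : forall k y r, P k y -> P k (y * r);
  powers0 : forall x, P 0%N x;
  powers_mulJ : forall k y a, P k y -> Jp a -> P k.+1 (y * a);
  powers_Jmul : forall k a y, Jp a -> P k y -> P k.+1 (a * y);
  powers_ind : forall k (A : S -> Prop), A 0 -> (forall x y, A x -> A y -> A (x + y)) ->
    (forall a y, Jp a -> P k y -> A (a * y)) -> forall x, P k.+1 x -> A x;
  powers_nil : forall x, P d x -> x = 0;
  powers_nil_min : forall k, (forall x, P k x -> x = 0) -> (d <= k)%N }.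

Definition socle (S : pzRingType) (P : nat -> S -> Prop) (i : nat) (x : S) : Prop :=
  forall y, P i y -> y * x = 0.

Section RadicalPowers.
Variables (S : pzRingType) (Jp : S -> Prop) (P : nat -> S -> Prop) (d : nat).
Hypothesis HP : radical_powers Jp P d.
Implicit Type M : nat -> S -> Prop.

Lemma powersS_sub k x : P k.+1 x -> P k x.
Proof.
have hP := powers_left_ideal HP k.
apply: (powers_ind HP) => [|y z|a y _].
- exact: left_ideal0.
- exact: left_idealD.
- exact: left_idealM.
Qed.

Lemma filtration_kill n M : semisimple_filtration n M ->
  forall k i y x, (i + k <= n)%N -> P k y -> M (i + k)%N x -> M i (y * x).
Proof.
move=> [hM _ _ hMS hss]; elim=> [|k IH] i y x hik.
  by rewrite addn0 in hik * => _ Mx; apply: left_idealM (hM i hik) Mx.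
have hin : (i < n)%N by lia.
have hMi := hM i (ltnW hin).
move=> Py Mx; apply: (powers_ind HP (A := fun y => M i (y * x))) Py => [|y1 y2|a z Ja Pz].
- by rewrite mul0r; apply: left_ideal0.
- by rewrite mulrDl; apply: left_idealD.
rewrite -mulrA; apply: (semisimple_factor_kill hMi (hM _ hin) (fun z => hMS i z hin) (hss i hin)).
  by move=> r; apply: (powers_quasi_regular HP).
by apply: IH; rewrite ?addSnnS.
Qed.

Lemma filtration_length_ge n M : semisimple_filtration n M -> (d <= n)%N.
Proof.
move=> hM; apply: (powers_nil_min HP) => x Px; have [_ hM0 hMn _ _] := hM.
by apply/hM0; rewrite -[x]mulr1; apply: (filtration_kill hM (i := 0) (k := n)).
Qed.

Lemma radical_filtration : semisimple_filtration d (fun i => P (d - i)%N).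
Proof.
have hP := powers_left_ideal HP.
split=> [i _ //|x|x|i x hi|i hi].
- by rewrite subn0; split=> [|->]; [apply: (powers_nil HP) | apply: left_ideal0].
- by rewrite subnn; apply: (powers0 HP).
- by rewrite -(subnSK hi); apply: powersS_sub.
- rewrite -(subnSK hi); apply: (semisimple_factor_of_annihilated (powers_semisimple HP)) => //.
    exact: powersS_sub.
  by move=> a x Ja; apply: (powers_Jmul HP).
Qed.

Lemma socle_left_ideal i : left_ideal (socle P i).
Proof.
split=> [y _|x z hx hz y Py|r x hx y Py]; first by rewrite mulr0.
- by rewrite mulrBr hx // hz // subrr.
- by rewrite mulrA; apply: hx; apply: (powers_mulr HP).
Qed.

Lemma socle_filtration : semisimple_filtration d (socle P).
Proof.
split=> [i _|x|x y Py|i x _ hx y Py|i hi].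
- exact: socle_left_ideal.
- by split=> [/(_ 1 (powers0 HP _))|-> y _]; [rewrite mul1r | rewrite mulr0].
- by rewrite (powers_nil HP Py) mul0r.
- by apply: hx; apply: powersS_sub.
- apply: (semisimple_factor_of_annihilated (powers_semisimple HP)); try exact: socle_left_ideal.
  + by move=> x hx y Py; apply: hx; apply: powersS_sub.
  + by move=> a x Ja hx y Py; rewrite mulrA; apply: hx; apply: (powers_mulJ HP).
Qed.

Lemma loewy_of_semisimple M : semisimple_filtration d M -> loewy_filtration d M.
Proof. by move=> hM; split=> // m M'; apply: filtration_length_ge. Qed.

Lemma loewy_length_eq n M : loewy_filtration n M -> n = d.
Proof.
move=> [hM hmin]; apply/eqP.
by rewrite eqn_leq (hmin _ _ radical_filtration) (filtration_length_ge hM).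
Qed.

Lemma radical_sub_filtration M i x : semisimple_filtration d M -> (i <= d)%N ->
  P (d - i)%N x -> M i x.
Proof.
move=> hM hi Px; have [_ _ hMd _ _] := hM; rewrite -[x]mulr1.
by apply: (filtration_kill hM (k := (d - i)%N)); rewrite ?subnKC.
Qed.

Lemma filtration_sub_socle M i x : semisimple_filtration d M -> (i <= d)%N ->
  M i x -> socle P i x.
Proof.
move=> hM hi Mx y Py; have [_ hM0 _ _ _] := hM; apply/hM0.
by apply: (filtration_kill hM (k := i) (i := 0)); rewrite ?add0n.
Qed.

Theorem left_rigid_iff_socle :
  left_rigid S <-> forall i, (i <= d)%N -> forall x, socle P i x -> P (d - i)%N x.
Proof.
have rad := loewy_of_semisimple radical_filtration.
split=> [[_ uniq] i hi x|socP].
  have [_ E] := uniq _ _ _ _ rad (loewy_of_semisimple socle_filtration).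
  exact: proj2 (E i hi x).
split; first by exists d, (fun i => P (d - i)%N).
move=> n M n' M' hM hM'.
move: (loewy_length_eq hM) (loewy_length_eq hM') => En En'; subst n n'; split=> // i hi x.
have MP M0 : loewy_filtration d M0 -> M0 i x <-> P (d - i)%N x.
  move=> [hM0 _]; split; last exact: radical_sub_filtration.
  by move/(filtration_sub_socle hM0 hi); apply: socP.
exact: iff_trans (MP _ hM) (iff_sym (MP _ hM')).
Qed.

End RadicalPowers.

Lemma radical_powers_jac (R : pzRingType) d :
  semisimple_ring_mod_jac R -> loewy_length R d -> radical_powers (@jac R) (@jpow R) d.
Proof.
move=> Hss [Jnil Jnil_min]; split=> //.
- by move=> j r Jj; have [u hu] := jac_quasi_regular Jnil r Jj; exists u.
- exact: jpow_left_ideal.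
- exact: jpow_mulr.
- exact: jpow_mul_jac.
- exact: jpow_jac_mul.
- move=> k A A0 AD HA _ [m [a [b [Ja Pb ->]]]].
  by apply: (big_ind A) => // i _; apply: HA _ _ (Ja i) (Pb i).
Qed.

Lemma radical_powers_jac_op (R : pzRingType) d :
  semisimple_ring_mod_jac R -> loewy_length R d -> @radical_powers R^c (@jac R) (@jpow R) d.
Proof.
move=> Hss [Jnil Jnil_min]; have hP := jpow_left_ideal R; split=> //.
- by move=> j r Jj; have [u hu] := jac_quasi_regular_op Jnil r Jj; exists u.
- exact: semisimple_mod_jac_op.
- move=> k; split=> [|x y|r x]; [exact: left_ideal0 (hP k) | exact: left_idealB (hP k) |].
  exact: jpow_mulr.
- by move=> k y r; apply: left_idealM (hP k).
- by move=> k y a Py Ja; apply: jpow_jac_mul.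
- by move=> k a y Ja Py; apply: jpow_mul_jac.
- by move=> k A A0 AD HA; apply: (@jpow_ind_right R k A) => // y a Py Ja; apply: HA a y Ja Py.
Qed.

Lemma dual_jsysE (R : pzRingType) d a b (x : R) : (a <= d)%N -> (b <= d)%N ->
  dual_sys d (@jsys R d) a.+1 b.+1 x <-> forall y, jpow a y -> jpow b (x * y).
Proof.
move=> ha hb; rewrite /dual_sys /jsys.
have -> : (d.+1 - (d.+2 - a.+1) = a)%N by lia.
by have -> : (d.+1 - (d.+2 - b.+1) = b)%N by lia.
Qed.

Lemma jsys_opE (R : pzRingType) d a b (x : R) :
  jsys_op d a.+1 b.+1 x <-> forall y, jpow (d - b) y -> jpow (d - a) (y * x).
Proof. by rewrite /jsys_op !subSS. Qed.

Section DualJacobsonSystem.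
Variables (R : pzRingType) (d : nat).
Hypothesis Jnil : forall x : R, jpow d x -> x = 0.

Definition dual_jsys_eq_op : Prop :=
  forall i j : nat, (1 <= i <= d.+1)%N -> (1 <= j <= d.+1)%N ->
    forall x : R, dual_sys d (@jsys R d) i j x <-> jsys_op d i j x.

Lemma dual_jsys_of_socles :
  (forall i, (i <= d)%N -> forall x : R, socle (@jpow R) i x -> jpow (d - i) x) ->
  (forall i, (i <= d)%N -> forall x : R^c, @socle R^c (@jpow R) i x -> @jpow R (d - i) x) ->
  dual_jsys_eq_op.
Proof.
move=> socL socR [//|a] [//|b]; rewrite !ltnS => /andP[_ ha] /andP[_ hb] x.
rewrite dual_jsysE // jsys_opE; split=> H y Py.
- apply: (socR a ha) => z Pz; change (y * x * z = 0); rewrite -mulrA; apply: Jnil.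
  by have := jpow_mul Py (H z Pz); rewrite subnK.
- have hdb : (d - b <= d)%N by rewrite leq_subr.
  rewrite -[b](subKn hb); apply: (socL _ hdb) => z Pz; rewrite mulrA; apply: Jnil.
  by have := jpow_mul (H z Pz) Py; rewrite subnK.
Qed.

Lemma socles_of_dual_jsys : dual_jsys_eq_op ->
  (forall i, (i <= d)%N -> forall x : R, socle (@jpow R) i x -> jpow (d - i) x) /\
  (forall i, (i <= d)%N -> forall x : R^c, @socle R^c (@jpow R) i x -> @jpow R (d - i) x).
Proof.
rewrite /dual_jsys_eq_op => C; split=> i hi x hx.
- have hdi : (d - i <= d)%N by rewrite leq_subr.
  have hj : (1 <= (d - i).+1 <= d.+1)%N by rewrite /= ltnS.
  have /(dual_jsysE _ (leq0n d) hdi) H : dual_sys d (@jsys R d) 1 (d - i).+1 x.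
    apply/(C 1%N _ isT hj)/jsys_opE => y.
    rewrite subKn // subn0 => Py; rewrite (hx y Py).
    exact: left_ideal0 (jpow_left_ideal R d).
  by rewrite -[x]mulr1; apply: H.
- have hi' : (1 <= i.+1 <= d.+1)%N by rewrite /= ltnS.
  have hd : (1 <= d.+1 <= d.+1)%N by rewrite /= leqnn.
  have /jsys_opE H : jsys_op d i.+1 d.+1 (x : R).
    apply/(C _ _ hi' hd)/(dual_jsysE _ hi (leqnn d)) => y Py.
    by rewrite (hx y Py : (x : R) * y = 0); apply: left_ideal0 (jpow_left_ideal R d).
  by have := H 1; rewrite mul1r subnn; apply.
Qed.

End DualJacobsonSystem.

Theorem proposition2p9 (R : pzRingType) (d : nat) :
  semiprimary R -> loewy_length R d ->
  (rigid_ring R <->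
   forall i j : nat, (1 <= i <= d.+1)%N -> (1 <= j <= d.+1)%N ->
     forall x : R, dual_sys d (@jsys R d) i j x <-> jsys_op d i j x).
Proof.
move=> [_ Hss] hd; have [Jnil _] := hd.
have rigidL := left_rigid_iff_socle (radical_powers_jac Hss hd).
have rigidR := left_rigid_iff_socle (radical_powers_jac_op Hss hd).
split=> [[/rigidL socL /rigidR socR]|C]; first exact: dual_jsys_of_socles Jnil socL socR.
by have [/rigidL ? /rigidR ?] := socles_of_dual_jsys C; split.
Qed.
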